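(* Let $w:A\to B$ be a weak equivalence in a P-category $(\mathcal{C},P,\mathcal{F},\mathcal{W})$. Then the induced map $\overline{w}:=((\delta^0_A,\delta^1_A),P(w)):P(A)\to\mathcal{P}(w,w)$ is a weak equivalence.
   Context: Let $\mathcal{C}$ have finite products and a final object $e$. A functorial path is a functor $P$ with natural transformations $\iota:1\to P$, $\delta^0,\delta^1:P\to1$, $\delta^0\iota=\delta^1\iota=1$, equipped with a symmetry $\tau$ (natural automorphism of $P$, $\tau\tau=1$, $\tau\iota=\iota$, $\delta^k\tau=\delta^{1-k}$), a coproduct $c:P\to P^2$ ($c_{P(A)}c_A=P(c_A)c_A$, $\delta^1_{P(A)}c_A=P(\delta^1_A)c_A=1$, $c_A\iota_A=\iota_{P(A)}\iota_A$, $\delta^0_{P(A)}c_A=P(\delta^0_A)c_A=\iota_A\delta^0_A$), an interchange $\mu$ (natural automorphism of $P^2$, $\delta^k_{P(A)}\mu_A=P(\delta^k_A)$, $P(\delta^k_A)\mu_A=\delta^k_{P(A)}$) and a folding map $\nabla:P^2\to P$ ($\delta^k\nabla=\delta^k\delta^k_P$, $\nabla\iota_P=1$). The double mapping path $\mathcal{P}(w,w)$ is the fibre product of $w\times w:A\times A\to B\times B$ and $(\delta^0_B,\delta^1_B):P(B)\to B\times B$. A P-category has classes $\mathcal{F}$ (fibrations), $\mathcal{W}$ (weak equivalences) satisfying: (P$_1$) both contain isomorphisms and are closed under composition, $\mathcal{W}$ is 2-out-of-3, each $A\to e$ is a fibration; (P$_2$) $\iota_A\in\mathcal{W}$, $(\delta^0_A,\delta^1_A)\in\mathcal{F}$,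 $\delta^0_A,\delta^1_A\in\mathcal{F}\cap\mathcal{W}$; (P$_3$) for $u:A\to C$ and $v:B\to C$ in $\mathcal{F}$, $A\times_CB$ exists, $\pi_1\in\mathcal{F}$, $\pi_1\in\mathcal{F}\cap\mathcal{W}$ if $v$ is, and $\pi_2\in\mathcal{W}$ if $u\in\mathcal{W}$; (P$_4$) $P$ preserves fibrations, weak equivalences and fibre products; (P$_5$) for each fibration $v:A\to B$, $((\delta^0_A,\delta^1_A),P(v)):P(A)\to\mathcal{P}(v,v)$ is a fibration. *)

Set Implicit Arguments.
Unset Strict Implicit.
Set Universe Polymorphism.

Record Category := {
  ob :> Type;
  hom : ob -> ob -> Type;
  idm : forall A, hom A A;
  comp : forall A B C, hom B C -> hom A B -> hom A C;
  comp_id_l : forall A B (f : hom A B), comp (idm B) f = f;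
  comp_id_r : forall A B (f : hom A B), comp f (idm A) = f;
  comp_assoc : forall A B C D (h : hom C D) (g : hom B C) (f : hom A B),
      comp h (comp g f) = comp (comp h g) f
}.
Arguments hom {c} _ _.
Arguments idm {c} _.
Arguments comp {c A B C} _ _.

Notation "g ⊚ f" := (comp g f) (at level 40, left associativity).

Definition is_iso (C : Category) (A B : C) (f : hom A B) : Prop :=
  exists g : hom B A, g ⊚ f = idm A /\ f ⊚ g = idm B.

Definition is_pullback (C : Category) (A B Z X : C)
  (u : hom A Z) (v : hom B Z) (p1 : hom X A) (p2 : hom X B) : Prop :=
  u ⊚ p1 = v ⊚ p2 /\
  forall (Y : C) (f : hom Y A) (g : hom Y B), u ⊚ f = v ⊚ g ->
    exists! h : hom Y X, p1 ⊚ h = f /\ p2 ⊚ h = g.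

Record ProdCategory := {
  pc_cat :> Category;
  term : pc_cat;
  to_term : forall A : pc_cat, hom A term;
  to_term_uniq : forall (A : pc_cat) (f : hom A term), f = to_term A;
  prod : pc_cat -> pc_cat -> pc_cat;
  pr1 : forall A B : pc_cat, hom (prod A B) A;
  pr2 : forall A B : pc_cat, hom (prod A B) B;
  pair : forall (X A B : pc_cat), hom X A -> hom X B -> hom X (prod A B);
  pair_pr1 : forall X A B (f : hom X A) (g : hom X B), pr1 A B ⊚ pair f g = f;
  pair_pr2 : forall X A B (f : hom X A) (g : hom X B), pr2 A B ⊚ pair f g = g;
  pair_uniq : forall X A B (h : hom X (prod A B)),
      h = pair (pr1 A B ⊚ h) (pr2 A B ⊚ h)
}.
Arguments term {p}.
Arguments prod {p} _ _.
Arguments pr1 {p} _ _.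
Arguments pr2 {p} _ _.
Arguments pair {p X A B} _ _.

Definition prodmap (C : ProdCategory) (A A' B B' : C)
  (f : hom A B) (g : hom A' B') : hom (prod A A') (prod B B') :=
  pair (f ⊚ pr1 A A') (g ⊚ pr2 A A').

Record Functor (C : Category) := {
  fob :> C -> C;
  fmap : forall A B : C, hom A B -> hom (fob A) (fob B);
  fmap_id : forall A : C, fmap (idm A) = idm (fob A);
  fmap_comp : forall (A B D : C) (g : hom B D) (f : hom A B),
      fmap (g ⊚ f) = fmap g ⊚ fmap f
}.
Arguments fmap {C} f0 {A B} _ : rename.

Record FunctorialPath (C : ProdCategory) := {
  P :> Functor C;
  iota : forall A : C, hom A (P A);
  iota_nat : forall (A B : C) (f : hom A B), fmap P f ⊚ iota A = iota B ⊚ f;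
  d0 : forall A : C, hom (P A) A;
  d0_nat : forall (A B : C) (f : hom A B), f ⊚ d0 A = d0 B ⊚ fmap P f;
  d1 : forall A : C, hom (P A) A;
  d1_nat : forall (A B : C) (f : hom A B), f ⊚ d1 A = d1 B ⊚ fmap P f;
  d0_iota : forall A : C, d0 A ⊚ iota A = idm A;
  d1_iota : forall A : C, d1 A ⊚ iota A = idm A;
  tau : forall A : C, hom (P A) (P A);
  tau_nat : forall (A B : C) (f : hom A B), fmap P f ⊚ tau A = tau B ⊚ fmap P f;
  tau_tau : forall A : C, tau A ⊚ tau A = idm (P A);
  tau_iota : forall A : C, tau A ⊚ iota A = iota A;
  d0_tau : forall A : C, d0 A ⊚ tau A = d1 A;
  d1_tau : forall A : C, d1 A ⊚ tau A = d0 A;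
  cop : forall A : C, hom (P A) (P (P A));
  cop_nat : forall (A B : C) (f : hom A B),
      fmap P (fmap P f) ⊚ cop A = cop B ⊚ fmap P f;
  cop_coassoc : forall A : C, cop (P A) ⊚ cop A = fmap P (cop A) ⊚ cop A;
  cop_d1_l : forall A : C, d1 (P A) ⊚ cop A = idm (P A);
  cop_d1_r : forall A : C, fmap P (d1 A) ⊚ cop A = idm (P A);
  cop_iota : forall A : C, cop A ⊚ iota A = iota (P A) ⊚ iota A;
  cop_d0_l : forall A : C, d0 (P A) ⊚ cop A = iota A ⊚ d0 A;
  cop_d0_r : forall A : C, fmap P (d0 A) ⊚ cop A = iota A ⊚ d0 A;
  mu : forall A : C, hom (P (P A)) (P (P A));
  mu_inv : forall A : C, hom (P (P A)) (P (P A));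
  mu_nat : forall (A B : C) (f : hom A B),
      fmap P (fmap P f) ⊚ mu A = mu B ⊚ fmap P (fmap P f);
  mu_inv_l : forall A : C, mu_inv A ⊚ mu A = idm (P (P A));
  mu_inv_r : forall A : C, mu A ⊚ mu_inv A = idm (P (P A));
  mu_d0_l : forall A : C, d0 (P A) ⊚ mu A = fmap P (d0 A);
  mu_d1_l : forall A : C, d1 (P A) ⊚ mu A = fmap P (d1 A);
  mu_d0_r : forall A : C, fmap P (d0 A) ⊚ mu A = d0 (P A);
  mu_d1_r : forall A : C, fmap P (d1 A) ⊚ mu A = d1 (P A);
  nabla : forall A : C, hom (P (P A)) (P A);
  nabla_nat : forall (A B : C) (f : hom A B),
      fmap P f ⊚ nabla A = nabla B ⊚ fmap P (fmap P f);
  nabla_d0 : forall A : C, d0 A ⊚ nabla A = d0 A ⊚ d0 (P A);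
  nabla_d1 : forall A : C, d1 A ⊚ nabla A = d1 A ⊚ d1 (P A);
  nabla_iota : forall A : C, nabla A ⊚ iota (P A) = idm (P A)
}.
Arguments iota {C} p A : rename.
Arguments d0 {C} p A : rename.
Arguments d1 {C} p A : rename.

Definition dd (C : ProdCategory) (Pa : FunctorialPath C) (A : C)
  : hom (Pa A) (prod A A) := pair (d0 Pa A) (d1 Pa A).

Record PCategory := {
  pcat :> ProdCategory;
  path : FunctorialPath pcat;
  Fib : forall A B : pcat, hom A B -> Prop;
  Weq : forall A B : pcat, hom A B -> Prop;
  fib_iso : forall (A B : pcat) (f : hom A B), is_iso f -> Fib f;
  weq_iso : forall (A B : pcat) (f : hom A B), is_iso f -> Weq f;
  fib_comp : forall (A B D : pcat) (g : hom B D) (f : hom A B),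
      Fib f -> Fib g -> Fib (g ⊚ f);
  weq_comp : forall (A B D : pcat) (g : hom B D) (f : hom A B),
      Weq f -> Weq g -> Weq (g ⊚ f);
  weq_2of3_l : forall (A B D : pcat) (g : hom B D) (f : hom A B),
      Weq f -> Weq (g ⊚ f) -> Weq g;
  weq_2of3_r : forall (A B D : pcat) (g : hom B D) (f : hom A B),
      Weq g -> Weq (g ⊚ f) -> Weq f;
  fib_term : forall A : pcat, Fib (to_term A);
  weq_iota : forall A : pcat, Weq (iota path A);
  fib_dd : forall A : pcat, Fib (dd path A);
  fib_d0 : forall A : pcat, Fib (d0 path A);
  weq_d0 : forall A : pcat, Weq (d0 path A);
  fib_d1 : forall A : pcat, Fib (d1 path A);
  weq_d1 : forall A : pcat, Weq (d1 path A);
  pb_exists : forall (A B Z : pcat) (u : hom A Z) (v : hom B Z), Fib v ->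
      exists (X : pcat) (p1 : hom X A) (p2 : hom X B), is_pullback u v p1 p2;
  pb_fib : forall (A B Z X : pcat) (u : hom A Z) (v : hom B Z)
      (p1 : hom X A) (p2 : hom X B),
      Fib v -> is_pullback u v p1 p2 -> Fib p1;
  pb_trivfib : forall (A B Z X : pcat) (u : hom A Z) (v : hom B Z)
      (p1 : hom X A) (p2 : hom X B),
      Fib v -> is_pullback u v p1 p2 -> Weq v -> Weq p1;
  pb_weq : forall (A B Z X : pcat) (u : hom A Z) (v : hom B Z)
      (p1 : hom X A) (p2 : hom X B),
      Fib v -> is_pullback u v p1 p2 -> Weq u -> Weq p2;
  P_fib : forall (A B : pcat) (f : hom A B), Fib f -> Fib (fmap path f);
  P_weq : forall (A B : pcat) (f : hom A B), Weq f -> Weq (fmap path f);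
  P_pb : forall (A B Z X : pcat) (u : hom A Z) (v : hom B Z)
      (p1 : hom X A) (p2 : hom X B),
      Fib v -> is_pullback u v p1 p2 ->
      is_pullback (fmap path u) (fmap path v) (fmap path p1) (fmap path p2);
  (* (P5): for any fibration v : A -> B and any double mapping path
     (X, q1, q2) = P(v,v) (fibre product of v x v and (d0_B, d1_B)),
     the induced map ((d0_A, d1_A), P(v)) : P(A) -> X is a fibration *)
  P5 : forall (A B : pcat) (v : hom A B), Fib v ->
      forall (X : pcat) (q1 : hom X (prod A A)) (q2 : hom X (path B)),
      is_pullback (prodmap v v) (dd path B) q1 q2 ->
      forall vbar : hom (path A) X,
      q1 ⊚ vbar = dd path A -> q2 ⊚ vbar = fmap path v ->
      Fib vbar
}.
Arguments Fib {p A B} _.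
Arguments Weq {p A B} _.

(* A weak equivalence w has w x w a weak equivalence: both factors w x 1 and
   1 x w are base changes of w along product projections, which are fibrations
   since every object is fibrant.  The projection P(w,w) -> P(B) is then a base
   change of w x w along the fibration (d0, d1), hence a weak equivalence, and
   2-out-of-3 applied to P(w) = q2 . wbar gives the claim. *)

Section Products.
Context {C : ProdCategory}.

Lemma pair_comp (X Y A B : C) (f : hom X A) (g : hom X B) (h : hom Y X) :
  pair f g ⊚ h = pair (f ⊚ h) (g ⊚ h).
Proof.
  rewrite (pair_uniq (pair f g ⊚ h)), !comp_assoc, pair_pr1, pair_pr2.
  reflexivity.
Qed.

Lemma pair_ext (X A B : C) (h k : hom X (prod A B)) :
  pr1 A B ⊚ h = pr1 A B ⊚ k -> pr2 A B ⊚ h = pr2 A B ⊚ k -> h = k.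
Proof.
  intros E1 E2. rewrite (pair_uniq h), (pair_uniq k), E1, E2. reflexivity.
Qed.

Lemma prodmap_factor (A A' B B' : C) (f : hom A B) (g : hom A' B') :
  prodmap f g = prodmap f (idm B') ⊚ prodmap (idm A) g.
Proof.
  unfold prodmap.
  rewrite pair_comp, <- !comp_assoc, pair_pr1, pair_pr2, !comp_id_l.
  reflexivity.
Qed.

Lemma is_pullback_sym {A B Z X : C} {u : hom A Z} {v : hom B Z}
  {p1 : hom X A} {p2 : hom X B} :
  is_pullback u v p1 p2 -> is_pullback v u p2 p1.
Proof.
  intros [Hsq Huniv]. split; [symmetry; exact Hsq |].
  intros Y f g E.
  destruct (Huniv Y g f (eq_sym E)) as [h [[H1 H2] Hh]].
  exists h. split; [split; assumption |].
  intros h' [H1' H2']. apply Hh. split; assumption.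
Qed.

Lemma is_pullback_term (A B : C) :
  is_pullback (to_term A) (to_term B) (pr1 A B) (pr2 A B).
Proof.
  split.
  - rewrite (to_term_uniq (to_term A ⊚ pr1 A B)),
      (to_term_uniq (to_term B ⊚ pr2 A B)).
    reflexivity.
  - intros Y f g _. exists (pair f g). split.
    + split; [apply pair_pr1 | apply pair_pr2].
    + intros h [H1 H2]. symmetry.
      apply pair_ext; rewrite ?pair_pr1, ?pair_pr2; assumption.
Qed.

Lemma is_pullback_prodmap_l {A B : C} (D : C) (f : hom A B) :
  is_pullback f (pr1 B D) (pr1 A D) (prodmap f (idm D)).
Proof.
  unfold prodmap. split; [rewrite pair_pr1; reflexivity |].
  intros Y g k E. exists (pair g (pr2 B D ⊚ k)). split.
  - split; [apply pair_pr1 |].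
    apply pair_ext.
    + rewrite comp_assoc, pair_pr1, <- comp_assoc, pair_pr1. exact E.
    + rewrite comp_assoc, pair_pr2, <- comp_assoc, pair_pr2, comp_id_l.
      reflexivity.
  - intros h [H1 H2]. symmetry. apply pair_ext.
    + rewrite pair_pr1. exact H1.
    + rewrite pair_pr2, <- H2, comp_assoc, pair_pr2, <- comp_assoc, comp_id_l.
      reflexivity.
Qed.

Lemma is_pullback_prodmap_r {A B : C} (D : C) (f : hom A B) :
  is_pullback f (pr2 D B) (pr2 D A) (prodmap (idm D) f).
Proof.
  unfold prodmap. split; [rewrite pair_pr2; reflexivity |].
  intros Y g k E. exists (pair (pr1 D B ⊚ k) g). split.
  - split; [apply pair_pr2 |].
    apply pair_ext.
    + rewrite comp_assoc, pair_pr1, <- comp_assoc, pair_pr1, comp_id_l.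
      reflexivity.
    + rewrite comp_assoc, pair_pr2, <- comp_assoc, pair_pr2. exact E.
  - intros h [H1 H2]. symmetry. apply pair_ext.
    + rewrite pair_pr1, <- H2, comp_assoc, pair_pr1, <- comp_assoc, comp_id_l.
      reflexivity.
    + rewrite pair_pr2. exact H1.
Qed.

End Products.

Section WeakEquivalences.
Context {C : PCategory}.

Lemma fib_pr1 (A B : C) : Fib (pr1 A B).
Proof.
  exact (pb_fib (fib_term B) (is_pullback_term A B)).
Qed.

Lemma fib_pr2 (A B : C) : Fib (pr2 A B).
Proof.
  exact (pb_fib (fib_term A) (is_pullback_sym (is_pullback_term A B))).
Qed.

Lemma weq_prodmap {A A' B B' : C} {f : hom A B} {g : hom A' B'} :
  Weq f -> Weq g -> Weq (prodmap f g).
Proof.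
  intros Hf Hg. rewrite prodmap_factor. apply weq_comp.
  - exact (pb_weq (fib_pr2 A B') (is_pullback_prodmap_r A g) Hg).
  - exact (pb_weq (fib_pr1 B B') (is_pullback_prodmap_l B' f) Hf).
Qed.

End WeakEquivalences.

Theorem lemma2p18 (C : PCategory) (A B : C) (w : hom A B) :
  Weq w ->
  forall (X : C) (q1 : hom X (prod A A)) (q2 : hom X (path C B)),
  is_pullback (prodmap w w) (dd (path C) B) q1 q2 ->
  forall wbar : hom (path C A) X,
  q1 ⊚ wbar = dd (path C) A -> q2 ⊚ wbar = fmap (path C) w ->
  Weq wbar.
Proof.
  intros Hw X q1 q2 Hpb wbar _ E2.
  assert (Hq2 : Weq q2) by exact (pb_weq (fib_dd B) Hpb (weq_prodmap Hw Hw)).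
  apply (weq_2of3_r Hq2). rewrite E2. exact (P_weq Hw).
Qed.
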